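(* Let $T$ be a decomposition tree of a distance-hereditary graph $G$, and let $v$ be an internal node of $T$ labeled $\odot$ with left child $v_l$ and right child $v_r$, such that property (P) holds at $v_l$ and at $v_r$. Then $\hat\alpha(v)=\hat\alpha(v_l)+\hat\alpha(v_r)$.
   Context: All graphs are finite, simple, undirected. For a graph $H$ and $S\subseteq V(H)$, $N_H[S]$ is $S$ together with all vertices adjacent to a vertex of $S$, and $H[S]$ is the induced subgraph. Graphs carry a ''twin set'': a single-vertex graph on $x$ has twin set $\{x\}$. For vertex-disjoint graphs $G_l,G_r$ with twin sets $TS(G_l),TS(G_r)$: the true twin operation $G_l\otimes G_r$ has vertex set $V(G_l)\cup V(G_r)$, edge set $E(G_l)\cup E(G_r)\cup\{uw: u\in TS(G_l), w\in TS(G_r)\}$ and twin set $TS(G_l)\cup TS(G_r)$; the false twin operation $G_l\odot G_r$ has vertex set $V(G_l)\cup V(G_r)$, edge set $E(G_l)\cup E(G_r)$, twin set $TS(G_l)\cup TS(G_r)$; the attachment operation $G_l\oplus G_r$ has the same vertex and edge sets as $G_l\otimes G_r$ and twin set $TS(G_l)$. A decomposition tree $T$ of $G$ is a rooted binary tree whose leaves are in bijection with $V(G)$, each internal node having a left and a right child and a label in $\{\otimes,\odot,\oplus\}$; for each node $v$ define $\hat G(v)$ and $\hat{TS}(v)$ recursively: for a leaf $x$, the single-vertex graph on $x$ with twin set $\{x\}$; for an internal node $v$ with label $\circ$ and children $v_l,v_r$, $\hat G(v)=\hat G(v_l)\circ\hat G(v_r)$ with the corresponding twin set; one requires $\hat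 G(\text{root})=G$. Then $\hat G(v)$ is the subgraph of $G$ induced by the set $\hat V(v)$ of leaves below $v$. For a node $u$ and $0\le k\le|\hat{TS}(u)|$, call $S\subseteq\hat V(u)$ $k$-feasible if $\hat V(u)\setminus\hat{TS}(u)\subseteq N_{\hat G(u)}[S]$ and there is $X\subseteq S\cap\hat{TS}(u)$ with $|X|=k$ such that $\hat G(u)[S\setminus X]$ has a perfect matching. $\hat\gamma_k(u)$ is the minimum size of a $k$-feasible set. $\hat{min}(u)=\min\{\hat\gamma_k(u):0\le k\le|\hat{TS}(u)|\}$, and $\hat\alpha(u)$, $\hat\beta(u)$ are the smallest and the largest $k$ with $\hat\gamma_k(u)=\hat{min}(u)$. Property (P) holds at $u$ if for every $0\le k\le|\hat{TS}(u)|$: $\hat\gamma_k(u)=\hat{min}(u)+\hat\alpha(u)-k$ when $k\le\hat\alpha(u)$; $\hat\gamma_k(u)=\hat{min}(u)+k-\hat\beta(u)$ when $k\ge\hat\beta(u)$; $\hat\gamma_k(u)=\hat{min}(u)$ when $\hat\alpha(u)<k<\hat\beta(u)$ and $k-\hat\alpha(u)$ is even; and $\hat\gamma_k(u)=\hat{min}(u)+1$ otherwise. *)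

From mathcomp Require Import all_boot.
Set Implicit Arguments. Unset Strict Implicit. Unset Printing Implicit Defensive.

Section Defs.
Variable V : finType.

Definition simple_graph (G : rel V) : Prop :=
  irreflexive G /\ symmetric G.

Definition walk_in (e : rel V) (S : {set V}) (u w : V) (n : nat) : Prop :=
  exists p : seq V, [/\ path e u p, last u p = w, size p = n & all (mem S) (u :: p)].

Definition dist_le (e : rel V) (S : {set V}) (u w : V) (n : nat) : Prop :=
  exists2 m, m <= n & walk_in e S u w m.

Definition distance_hereditary (G : rel V) : Prop :=
  forall S : {set V},
    (forall u w, u \in S -> w \in S -> exists n, walk_in G S u w n) ->
    forall u w, u \in S -> w \in S -> forall n,
      dist_le G S u w n <-> dist_le G setT u w n.

Inductive op := TrueTwin (* ⊗ *) | FalseTwin (* ⊙ *) | Attach (* ⊕ *).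

Inductive dtree :=
  | Leaf of V
  | Node of op & dtree & dtree.

Fixpoint leaves (t : dtree) : seq V :=
  match t with Leaf x => [:: x] | Node _ l r => leaves l ++ leaves r end.

Definition hatV (t : dtree) : {set V} := [set x in leaves t].

Fixpoint hatTS (t : dtree) : {set V} :=
  match t with
  | Leaf x => [set x]
  | Node TrueTwin l r => hatTS l :|: hatTS r
  | Node FalseTwin l r => hatTS l :|: hatTS r
  | Node Attach l r => hatTS l
  end.

Fixpoint hatE (t : dtree) : rel V :=
  match t with
  | Leaf _ => fun _ _ => false
  | Node FalseTwin l r => fun x y => hatE l x y || hatE r x y
  | Node _ l r => fun x y =>
      [|| hatE l x y, hatE r x y,
          (x \in hatTS l) && (y \in hatTS r) | (y \in hatTS l) && (x \in hatTS r)]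
  end.

(* T is a decomposition tree of G: leaves in bijection with V, \hat G(root) = G *)
Definition decomposition_tree (G : rel V) (T : dtree) : Prop :=
  perm_eq (leaves T) (enum V) /\ (forall x y, G x y = hatE T x y).

(* t is (the subtree rooted at) a node of T *)
Fixpoint node_of (t T : dtree) : Prop :=
  t = T \/ match T with Leaf _ => False | Node _ l r => node_of t l \/ node_of t r end.

Definition closed_nbh (t : dtree) (S : {set V}) : {set V} :=
  S :|: [set y in hatV t | [exists x in S, hatE t x y]].

Definition has_perfect_matching (t : dtree) (W : {set V}) : bool :=
  [exists M : {set {set V}},
     [forall m in M, exists a, exists b,
        [&& m == [set a; b], a != b, a \in W, b \in W & hatE t a b]]
     && [forall w in W, #|[set m in M | w \in m]| == 1]].

Definition kfeasible (t : dtree) (k : nat) (S : {set V}) : bool :=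
  [&& S \subset hatV t,
      (hatV t :\: hatTS t) \subset closed_nbh t S &
      [exists X : {set V},
         [&& X \subset S :&: hatTS t, #|X| == k & has_perfect_matching t (S :\: X)]]].

(* "infinity": strictly larger than the size of any vertex set *)
Definition infty : nat := #|V|.+1.

(* \hat\gamma_k(t); equals infty iff there is no k-feasible set *)
Definition gamma (t : dtree) (k : nat) : nat :=
  \big[minn/infty]_(S : {set V} | kfeasible t k S) #|S|.

Definition hatmin (t : dtree) : nat :=
  \big[minn/infty]_(k < #|hatTS t|.+1) gamma t k.

Definition alpha (t : dtree) : nat :=
  \big[minn/#|hatTS t|]_(k < #|hatTS t|.+1 | gamma t k == hatmin t) (k : nat).

Definition beta (t : dtree) : nat :=
  \max_(k < #|hatTS t|.+1 | gamma t k == hatmin t) (k : nat).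

Definition propP (t : dtree) : Prop :=
  forall k, k <= #|hatTS t| ->
    [/\ k <= alpha t -> gamma t k = hatmin t + (alpha t - k),
        beta t <= k -> gamma t k = hatmin t + (k - beta t),
        alpha t < k < beta t -> ~~ odd (k - alpha t) -> gamma t k = hatmin t &
        alpha t < k < beta t -> odd (k - alpha t) -> gamma t k = (hatmin t).+1].

End Defs.

(* In a false-twin node v = v_l ⊙ v_r no edge joins the two sides, so the
   k-feasible sets of v are exactly the unions of a k1-feasible set of v_l and
   a k2-feasible set of v_r with k = k1 + k2.  Hence
   γ_k(v) = min_{k1 + k2 = k} γ_k1(v_l) + γ_k2(v_r): the minimum of v is
   min(v_l) + min(v_r), it is attained at α(v_l) + α(v_r), and a smaller k
   forces k1 < α(v_l) or k2 < α(v_r), which costs at least one more vertex. *)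

From mathcomp Require Import all_boot.
Set Implicit Arguments. Unset Strict Implicit. Unset Printing Implicit Defensive.

Section MinOfNat.
Variables (I : finType) (P : pred I) (F : I -> nat) (d : nat).

Lemma bigmin_leq i : P i -> \big[minn/d]_(j | P j) F j <= F i.
Proof.
move=> Pi; have : i \in index_enum I by rewrite mem_index_enum.
elim: (index_enum I) => // j s IHs; rewrite inE big_cons => /orP[/eqP<- | /IHs].
  by rewrite Pi geq_minl.
by case: (P j) => //; rewrite geq_min => ->; rewrite orbT.
Qed.

Lemma bigmin_leq_idx : \big[minn/d]_(j | P j) F j <= d.
Proof. by elim/big_rec: _ => // j m _; rewrite geq_min => ->; rewrite orbT. Qed.

Lemma leq_bigmin n :
  n <= d -> (forall i, P i -> n <= F i) -> n <= \big[minn/d]_(j | P j) F j.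
Proof. by move=> nd nF; elim/big_ind: _ => // x y; rewrite leq_min => -> ->. Qed.

Lemma bigmin_attained :
  \big[minn/d]_(j | P j) F j = d \/ exists2 i, P i & F i = \big[minn/d]_(j | P j) F j.
Proof.
apply: (big_ind (fun m => m = d \/ exists2 i, P i & F i = m)); first by left.
  by move=> x y Kx Ky; rewrite /minn; case: ifP.
by move=> i Pi; right; exists i.
Qed.

End MinOfNat.

Lemma cardsU_disjoint (T : finType) (A B : {set T}) :
  [disjoint A & B] -> #|A :|: B| = #|A| + #|B|.
Proof. by move=> dAB; rewrite cardsU disjoint_setI0 // cards0 subn0. Qed.

Lemma cards_split (T : finType) (A B X : {set T}) :
  [disjoint A & B] -> X \subset A :|: B -> #|X| = #|X :&: A| + #|X :&: B|.
Proof.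
move=> dAB XAB; rewrite -cardsU_disjoint; first by rewrite -setIUr (setIidPl XAB).
exact: disjointW (subsetIr X A) (subsetIr X B) dAB.
Qed.

Section DecompositionTrees.
Variable V : finType.
Implicit Types (t l r s : dtree V) (S X W A : {set V}).

Lemma hatV_node o l r : hatV (Node o l r) = hatV l :|: hatV r.
Proof. by apply/setP=> x; rewrite /hatV !inE mem_cat. Qed.

Lemma hatTS_sub t : hatTS t \subset hatV t.
Proof.
elim: t => [x|[] l IHl r IHr]; first by rewrite sub1set /hatV !inE.
all: by rewrite hatV_node /= ?setUSS // subsetU ?IHl.
Qed.

Lemma hatTS_inhabited t : exists x, x \in hatTS t.
Proof.
elim: t => [x|[] l [a Ha] r _]; first by exists x; rewrite inE.
all: by exists a; rewrite /= ?inE ?Ha.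
Qed.

Lemma hatE_sym t : symmetric (hatE t).
Proof.
elim: t => [//|o l IHl r IHr] a b.
by case: o; rewrite /= IHl IHr //; case: (a \in hatTS l); case: (b \in hatTS l);
  case: (a \in hatTS r); case: (b \in hatTS r); rewrite /= ?orbT ?orbF.
Qed.

Lemma hatE_node_l o l r : subrel (hatE l) (hatE (Node o l r)).
Proof. by case: o => a b /= ->. Qed.

Lemma hatE_node_r o l r : subrel (hatE r) (hatE (Node o l r)).
Proof. by case: o => a b /= ->; rewrite orbT. Qed.

Lemma hatE_hatVl t a b : hatE t a b -> a \in hatV t.
Proof.
elim: t a b => [//|o l IHl r IHr] a b; rewrite hatV_node inE.
have inTS s x : x \in hatTS s -> x \in hatV s := subsetP (hatTS_sub s) x.
case: o => /=; first [
  by case/or4P=> [/IHl->|/IHr->|/andP[/inTS->]|/andP[_ /inTS->]]; rewrite ?orbT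
| by case/orP=> [/IHl->|/IHr->]; rewrite ?orbT ].
Qed.

Lemma hatE_hatVr t a b : hatE t a b -> b \in hatV t.
Proof. by rewrite hatE_sym; apply: hatE_hatVl. Qed.

Lemma disjoint_children o l r : uniq (leaves (Node o l r)) ->
  [/\ uniq (leaves l), uniq (leaves r) & [disjoint hatV l & hatV r]].
Proof.
rewrite /= cat_uniq => /and3P[ul /hasPn lr ur]; split=> //.
by rewrite disjoint_sym disjoints_subset; apply/subsetP=> x; rewrite /hatV !inE => /lr.
Qed.

Lemma uniq_leaves_subtree (N T : dtree V) :
  node_of N T -> uniq (leaves T) -> uniq (leaves N).
Proof.
elim: T => [x|o l IHl r IHr] /=; first by case=> [->|[]].
case=> [->|[/IHl|/IHr]] // IH; rewrite cat_uniq => /and3P[ul _ ur]; exact: IH.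
Qed.

Lemma exists_neighbour t y : uniq (leaves t) -> y \in hatV t -> y \notin hatTS t ->
  exists2 u, u != y & hatE t y u.
Proof.
elim: t y => [x|o l IHl r IHr] y; first by rewrite /hatV !inE => _ ->.
case/disjoint_children=> ul ur dlr; rewrite hatV_node inE.
have TSl : hatTS l \subset hatTS (Node o l r) by case: o; rewrite /= ?subsetUl.
case/orP=> [yl | yr] yt.
  have [u uy Eyu] := IHl y ul yl (contra (subsetP TSl y) yt).
  by exists u; rewrite // hatE_node_l.
have [yTSr | nyTSr] := boolP (y \in hatTS r); last first.
  by have [u uy Eyu] := IHr y ur yr nyTSr; exists u; rewrite // hatE_node_r.
case: o yt TSl => /=; rewrite ?inE ?yTSr ?orbT // => _ _.
have [a al] := hatTS_inhabited l.
exists a; last by rewrite al !orbT.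
by apply: contraTneq yr => <-; rewrite (disjointFr dlr) // (subsetP (hatTS_sub l)).
Qed.

Definition is_edge t (m : {set V}) : bool :=
  [exists a, exists b, [&& m == [set a; b], a != b & hatE t a b]].

Definition matching t (M : {set {set V}}) : bool :=
  [forall m in M, is_edge t m] && trivIset M.

Lemma is_edgeP t m :
  reflect (exists a b, [/\ m = [set a; b], a != b & hatE t a b]) (is_edge t m).
Proof.
apply: (iffP existsP) => [[a /existsP[b /and3P[/eqP-> ab Eab]]] | [a [b [-> ab Eab]]]].
  by exists a, b.
by exists a; apply/existsP; exists b; rewrite eqxx ab Eab.
Qed.

Lemma perfect_matchingP t W :
  reflect (exists2 M, matching t M & cover M = W) (has_perfect_matching t W).
Proof.
apply: (iffP existsP) => [[M /andP[/forall_inP pairsM /forall_inP onceM]] |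
                          [M /andP[/forall_inP edgesM tiM] <-]].
  have inW m x : m \in M -> x \in m -> x \in W.
    move/pairsM=> /existsP[a /existsP[b /and5P[/eqP-> _ aW bW _]]].
    by rewrite !inE => /orP[]/eqP->.
  exists M; last first.
    apply/setP=> x; apply/bigcupP/idP => [[m mM xm] | xW]; first exact: inW xm.
    have /cards1P[m0 M0] := onceM x xW.
    have : m0 \in [set m in M | x \in m] by rewrite M0 set11.
    by rewrite inE => /andP[m0M xm0]; exists m0.
  apply/andP; split.
    apply/forall_inP=> m /pairsM /existsP[a /existsP[b /and5P[/eqP-> ab _ _ Eab]]].
    by apply/is_edgeP; exists a, b.
  apply/trivIsetP=> m1 m2 m1M m2M; apply: contraR; rewrite -setI_eq0.
  case/set0Pn=> x /setIP[xm1 xm2]; have /cards1P[m0 M0] := onceM x (inW _ _ m1M xm1).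
  have m_eq m : m \in M -> x \in m -> m = m0.
    by move=> mM xm; apply/set1P; rewrite -M0 inE mM xm.
  by rewrite (m_eq m1) // (m_eq m2).
exists M; apply/andP; split.
  apply/forall_inP=> m mM; case/is_edgeP: (edgesM m mM) (mM) => a [b [-> ab Eab]] abM.
  apply/existsP; exists a; apply/existsP; exists b; rewrite eqxx ab Eab andbT /=.
  by apply/andP; split; apply/bigcupP; exists [set a; b]; rewrite // !inE eqxx ?orbT.
apply/forall_inP=> w wM; apply/cards1P; exists (pblock M w); apply/setP=> m.
rewrite !inE; apply/andP/eqP => [[mM wm] | ->]; first by rewrite (def_pblock tiM mM wm).
by rewrite pblock_mem // mem_pblock.
Qed.

Lemma cover_matching_sub t M : matching t M -> cover M \subset hatV t.
Proof.
case/andP=> /forall_inP edgesM _; apply/subsetP=> x /bigcupP[m /edgesM /is_edgeP].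
case=> a [b [-> _ Eab]] /set2P[]->.
  exact: hatE_hatVl Eab.
exact: hatE_hatVr Eab.
Qed.

Lemma maximum_matching_cover t M :
  matching t M -> (forall M', matching t M' -> #|M'| <= #|M|) ->
  forall a b, a != b -> hatE t a b -> (a \in cover M) || (b \in cover M).
Proof.
move=> /andP[/forall_inP edgesM tiM] maxM a b ab Eab; apply: contraT.
rewrite negb_or => /andP[aM bM].
have disj : {in M, forall B : {set V}, [disjoint [set a; b] & B]}.
  move=> B BM; rewrite disjoints_subset subUset !sub1set !inE.
  by apply/andP; split; [apply: contra aM | apply: contra bM] => xB;
    apply/bigcupP; exists B.
have set0M : set0 \notin M.
  by apply/negP=> /edgesM /is_edgeP[x [y [/setP/(_ x)]]]; rewrite !inE eqxx.
have [tiM' abM] := trivIsetU1 disj tiM set0M.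
have : matching t ([set a; b] |: M).
  rewrite /matching tiM' andbT; apply/forall_inP=> m.
  by case/setU1P=> [-> | /edgesM //]; apply/is_edgeP; exists a, b.
by move/maxM; rewrite cardsU1 abM add1n ltnn.
Qed.

Lemma exists_kfeasible0 t : uniq (leaves t) -> exists S, kfeasible t 0 S.
Proof.
(* A vertex outside the twin set is never isolated, so a maximum matching
   dominates it. *)
move=> ut; have matching0 : matching t set0.
  by apply/andP; split; [apply/forall_inP=> m | apply/trivIsetP=> m]; rewrite inE.
have [M matchingM maxM] := arg_maxnP (fun M : {set {set V}} => #|M|) matching0.
exists (cover M); apply/and3P; split; first exact: cover_matching_sub.
  apply/subsetP=> y /setDP[yV yTS]; apply/setUP.
  have [yM | yM] := boolP (y \in cover M); [by left | right].
  have [u uy Eyu] := exists_neighbour ut yV yTS.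
  rewrite in_set yV; apply/existsP; exists u; rewrite hatE_sym Eyu andbT.
  rewrite eq_sym in uy.
  by move: (maximum_matching_cover matchingM maxM uy Eyu); rewrite (negbTE yM).
apply/existsP; exists set0; rewrite sub0set cards0 setD0 /=.
by apply/perfect_matchingP; exists M.
Qed.

Lemma perfect_matching_restrict t s A W :
  (forall a b, hatE t a b -> (a \in A) = (b \in A)) ->
  (forall a b, a \in A -> hatE t a b -> hatE s a b) ->
  has_perfect_matching t W -> has_perfect_matching s (W :&: A).
Proof.
move=> sameside Ets /perfect_matchingP[M /andP[/forall_inP edgesM tiM] <-].
apply/perfect_matchingP; exists (M ::&: A).
  rewrite /matching trivIsetI // andbT; apply/forall_inP=> m /setIdP[mM mA].
  case/is_edgeP: (edgesM m mM) mA => a [b [-> ab Eab]] abA.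
  by apply/is_edgeP; exists a, b; split=> //; apply: Ets Eab; rewrite (subsetP abA) ?set21.
apply/eqP; rewrite eqEsubset cover_setI; apply/subsetP=> x /setIP[/bigcupP[m mM xm] xA].
apply/bigcupP; exists m => //; rewrite inE mM /=.
case/is_edgeP: (edgesM m mM) xm => a [b [-> _ Eab]] /set2P[] xab; subst x.
  by rewrite subUset !sub1set -(sameside _ _ Eab) xA.
by rewrite subUset !sub1set (sameside _ _ Eab) xA.
Qed.

Lemma perfect_matching_union t l r W1 W2 :
  subrel (hatE l) (hatE t) -> subrel (hatE r) (hatE t) -> [disjoint W1 & W2] ->
  has_perfect_matching l W1 -> has_perfect_matching r W2 ->
  has_perfect_matching t (W1 :|: W2).
Proof.
move=> Elt Ert dW /perfect_matchingP[M1 /andP[/forall_inP edges1 ti1] coverM1].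
move=> /perfect_matchingP[M2 /andP[/forall_inP edges2 ti2] coverM2]; subst W1 W2.
apply/perfect_matchingP; exists (M1 :|: M2); last exact: bigcup_setU.
rewrite /matching trivIsetU // andbT; apply/forall_inP=> m /setUP[/edges1|/edges2].
  by case/is_edgeP=> a [b [-> ab /Elt Eab]]; apply/is_edgeP; exists a, b.
by case/is_edgeP=> a [b [-> ab /Ert Eab]]; apply/is_edgeP; exists a, b.
Qed.

Definition feasible_with t S X : bool :=
  [&& S \subset hatV t, hatV t :\: hatTS t \subset closed_nbh t S,
      X \subset S :&: hatTS t & has_perfect_matching t (S :\: X)].

Lemma kfeasibleP t k S :
  reflect (exists2 X, feasible_with t S X & #|X| = k) (kfeasible t k S).
Proof.
apply: (iffP and3P) => [[SV dom /existsP[X /and3P[XS /eqP Xk pm]]] | [X fX Xk]].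
  by exists X; rewrite // /feasible_with SV dom XS pm.
case/and4P: fX => SV dom XS pm; split=> //.
by apply/existsP; exists X; rewrite XS Xk eqxx pm.
Qed.

Lemma kfeasible_le_size t k S : kfeasible t k S -> k <= #|hatTS t|.
Proof.
case/kfeasibleP=> X /and4P[_ _ XS _] <-.
by apply/subset_leq_card/(subset_trans XS)/subsetIr.
Qed.

Lemma closed_nbhS s t S S' :
  hatV s \subset hatV t -> subrel (hatE s) (hatE t) -> S \subset S' ->
  closed_nbh s S \subset closed_nbh t S'.
Proof.
move=> sV sE sS; apply/subsetP=> y /setUP[/(subsetP sS) yS | ].
  by apply/setUP; left.
rewrite in_set => /andP[ys /existsP[x /andP[xS Exy]]].
apply/setUP; right; rewrite in_set (subsetP sV) //=; apply/existsP; exists x.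
by rewrite (subsetP sS) // sE.
Qed.

Lemma feasible_with_restrict t s A S X :
  hatV s = hatV t :&: A -> hatTS s = hatTS t :&: A ->
  (forall a b, a \in A -> hatE t a b = hatE s a b) ->
  feasible_with t S X -> feasible_with s (S :&: A) (X :&: A).
Proof.
move=> Vs TSs Es /and4P[SV dom XS pm].
have inA a : a \in hatV s -> a \in A by rewrite Vs => /setIP[].
have sameside a b : hatE t a b -> (a \in A) = (b \in A).
  move=> Eab; apply/idP/idP => [aA | bA]; apply: inA.
    by apply: (@hatE_hatVr s a); rewrite -Es.
  by apply: (@hatE_hatVr s b); rewrite -Es // hatE_sym.
rewrite /feasible_with Vs TSs setSI //=; apply/and3P; split.
- apply/subsetP=> y /setDP[/setIP[yV yA] yTS].
  have : y \in closed_nbh t S.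
    by apply: (subsetP dom); rewrite inE yV andbT; apply: contra yTS => yT; rewrite inE yT.
  case/setUP=> [yS | ]; first by apply/setUP; left; rewrite inE yS.
  rewrite in_set => /andP[_ /existsP[x /andP[xS Exy]]].
  have Eyx : hatE s y x by rewrite -Es // hatE_sym.
  apply/setUP; right; rewrite in_set Vs inE yV yA; apply/existsP; exists x.
  by rewrite inE xS inA ?(hatE_hatVr Eyx) // hatE_sym.
- by rewrite setIACA setIid setSI.
have -> : (S :&: A) :\: (X :&: A) = (S :\: X) :&: A.
  by apply/setP=> x; rewrite !inE; case: (x \in A); rewrite ?andbF ?andbT.
by apply: perfect_matching_restrict pm => // a b aA; rewrite Es.
Qed.

Lemma feasible_with_component t s s' S X :
  [disjoint hatV s & hatV s'] ->
  hatV t = hatV s :|: hatV s' -> hatTS t = hatTS s :|: hatTS s' ->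
  (forall a b, hatE t a b = hatE s a b || hatE s' a b) ->
  feasible_with t S X -> feasible_with s (S :&: hatV s) (X :&: hatV s).
Proof.
move=> dss' Vt TSt Et; rewrite disjoint_sym in dss'.
apply: feasible_with_restrict.
- by rewrite Vt setIUl setIid disjoint_setI0 ?setU0.
- rewrite TSt setIUl (setIidPl (hatTS_sub s)) disjoint_setI0 ?setU0 //.
  exact: disjointWl (hatTS_sub s') dss'.
by move=> a b aV; rewrite Et orb_idr // => /hatE_hatVl; rewrite (disjointFl dss' aV).
Qed.

Lemma gamma_le_card t k S : kfeasible t k S -> gamma t k <= #|S|.
Proof. exact: bigmin_leq. Qed.

Lemma leq_gamma t k n :
  n <= infty V -> (forall S, kfeasible t k S -> n <= #|S|) -> n <= gamma t k.
Proof. exact: leq_bigmin. Qed.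

Lemma gamma_attained t k :
  gamma t k < infty V -> exists2 S, kfeasible t k S & #|S| = gamma t k.
Proof.
have [-> | [S fS cS] _] : gamma t k = infty V \/
    exists2 S, kfeasible t k S & #|S| = gamma t k := bigmin_attained _ _ _.
  by rewrite ltnn.
by exists S.
Qed.

Lemma hatmin_le_gamma t k : hatmin t <= gamma t k.
Proof.
have [kn | nk] := leqP k #|hatTS t|.
  exact: (@bigmin_leq _ _ _ _ (Ordinal (kn : k < #|hatTS t|.+1))).
apply: leq_trans (bigmin_leq_idx _ _ _) _; apply: leq_gamma => // S /kfeasible_le_size.
by rewrite leqNgt nk.
Qed.

Lemma hatmin_attained t : exists2 k, k <= #|hatTS t| & gamma t k = hatmin t.
Proof.
have [min_infty | [k _ gk]] : hatmin t = infty V \/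
    exists2 k : 'I_#|hatTS t|.+1, true & gamma t k = hatmin t := bigmin_attained _ _ _.
  exists 0 => //; apply/eqP; rewrite eqn_leq hatmin_le_gamma andbT min_infty.
  exact: bigmin_leq_idx.
by exists k => //; rewrite -ltnS ltn_ord.
Qed.

Lemma hatmin_lt_infty t : uniq (leaves t) -> hatmin t < infty V.
Proof.
case/exists_kfeasible0=> S fS; apply: leq_ltn_trans (hatmin_le_gamma t 0) _.
by apply: leq_ltn_trans (gamma_le_card fS) _; rewrite ltnS max_card.
Qed.

Lemma alpha_le_size t : alpha t <= #|hatTS t|.
Proof. exact: bigmin_leq_idx. Qed.

Lemma alpha_le t k : k <= #|hatTS t| -> gamma t k = hatmin t -> alpha t <= k.
Proof.
move=> kn gk; apply: (@bigmin_leq _ _ _ _ (Ordinal (kn : k < #|hatTS t|.+1))).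
by rewrite /= gk.
Qed.

Lemma gamma_alpha t : gamma t (alpha t) = hatmin t.
Proof.
have [alpha_size | [k /eqP gk <-] //] : alpha t = #|hatTS t| \/
    exists2 k : 'I_#|hatTS t|.+1, gamma t k == hatmin t & nat_of_ord k = alpha t :=
  bigmin_attained _ _ _.
have [k kn gk] := hatmin_attained t.
suff -> : alpha t = k by [].
by apply/eqP; rewrite eqn_leq alpha_le //= alpha_size.
Qed.

Lemma gamma_lower_bound t k : hatmin t + (k < alpha t) <= gamma t k.
Proof.
have [ka | _] := ltnP k (alpha t); last by rewrite addn0 hatmin_le_gamma.
rewrite addn1 ltn_neqAle hatmin_le_gamma andbT; apply/eqP=> gk.
have := alpha_le (leq_trans (ltnW ka) (alpha_le_size t)) (esym gk).
by rewrite leqNgt ka.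
Qed.

Lemma alpha_unique t a :
  gamma t a = hatmin t -> (forall k, k < a -> hatmin t < gamma t k) -> alpha t = a.
Proof.
move=> ga above; have a_le : a <= alpha t.
  by rewrite leqNgt; apply/negP=> /above; rewrite gamma_alpha ltnn.
by apply/eqP; rewrite eqn_leq a_le andbT alpha_le // (leq_trans a_le (alpha_le_size t)).
Qed.

Section FalseTwin.
Variables l r : dtree V.
Hypothesis dlr : [disjoint hatV l & hatV r].
Local Notation t := (Node FalseTwin l r).

Lemma kfeasible_false_twin_split k S : kfeasible t k S ->
  exists k1 k2, [/\ k = k1 + k2, kfeasible l k1 (S :&: hatV l),
    kfeasible r k2 (S :&: hatV r) & #|S| = #|S :&: hatV l| + #|S :&: hatV r|].
Proof.
case/kfeasibleP=> X fX <-; have /and4P[SV _ XS _] := fX; rewrite hatV_node in SV.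
have XV : X \subset hatV l :|: hatV r.
  by apply: subset_trans XS _; rewrite subIset ?SV.
exists #|X :&: hatV l|, #|X :&: hatV r|; split; try exact: cards_split.
  apply/kfeasibleP; exists (X :&: hatV l) => //.
  exact: feasible_with_component dlr (hatV_node _ _ _) _ _ fX.
apply/kfeasibleP; exists (X :&: hatV r) => //.
apply: (feasible_with_component (s' := l)) fX; rewrite 1?disjoint_sym //.
- by rewrite hatV_node setUC.
- by rewrite /= setUC.
by move=> a b; rewrite orbC.
Qed.

Lemma feasible_with_false_twin S1 X1 S2 X2 :
  feasible_with l S1 X1 -> feasible_with r S2 X2 ->
  feasible_with t (S1 :|: S2) (X1 :|: X2).
Proof.
case/and4P=> S1V dom1 + pm1 /and4P[S2V dom2 + pm2].
rewrite !subsetI => /andP[X1S1 X1T] /andP[X2S2 X2T].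
have dS : [disjoint S1 & S2] := disjointW S1V S2V dlr.
apply/and4P; split; first by rewrite hatV_node setUSS.
- rewrite hatV_node setDUl subUset; apply/andP; split.
    apply: subset_trans (setDS _ (subsetUl _ _)) _; apply: subset_trans dom1 _.
    by apply: closed_nbhS; rewrite ?hatV_node ?subsetUl //; apply: hatE_node_l.
  apply: subset_trans (setDS _ (subsetUr _ _)) _; apply: subset_trans dom2 _.
  by apply: closed_nbhS; rewrite ?hatV_node ?subsetUr //; apply: hatE_node_r.
- by rewrite subsetI !setUSS.
have -> : (S1 :|: S2) :\: (X1 :|: X2) = (S1 :\: X1) :|: (S2 :\: X2).
  rewrite setDUl !setDUr (setDidPl (disjointWr X2S2 dS)) (setIidPl (subsetDl _ _)).
  have dS' : [disjoint S2 & S1] by rewrite disjoint_sym.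
  by rewrite (setDidPl (disjointWr X1S1 dS')) (setIidPr (subsetDl _ _)).
apply: perfect_matching_union pm1 pm2; [exact: hatE_node_l | exact: hatE_node_r |].
exact: disjointW (subsetDl _ _) (subsetDl _ _) dS.
Qed.

Lemma card_kfeasible_false_twin k S :
  kfeasible t k S -> hatmin l + hatmin r + (k < alpha l + alpha r) <= #|S|.
Proof.
case/kfeasible_false_twin_split=> k1 [k2 [-> f1 f2 ->]].
have bound1 := leq_trans (gamma_lower_bound l k1) (gamma_le_card f1).
have bound2 := leq_trans (gamma_lower_bound r k2) (gamma_le_card f2).
apply: leq_trans (leq_add bound1 bound2); rewrite addnACA leq_add2l.
have [h1 | h1] := ltnP k1 (alpha l); first by rewrite (leq_trans (leq_b1 _)) ?leq_addr.
have [h2 | h2] := ltnP k2 (alpha r); first by rewrite (leq_trans (leq_b1 _)) ?leq_addl.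
by rewrite ltnNge leq_add.
Qed.

Lemma kfeasible_false_twin_optimal : uniq (leaves l) -> uniq (leaves r) ->
  exists2 S, kfeasible t (alpha l + alpha r) S & #|S| = hatmin l + hatmin r.
Proof.
have optimal s : uniq (leaves s) -> exists2 S, kfeasible s (alpha s) S & #|S| = hatmin s.
  by move=> us; rewrite -gamma_alpha; apply: gamma_attained; rewrite gamma_alpha hatmin_lt_infty.
move=> /optimal[Sl /kfeasibleP[Xl fXl <-] <-] /optimal[Sr /kfeasibleP[Xr fXr <-] <-].
have /and4P[SlV _ XlS _] := fXl; have /and4P[SrV _ XrS _] := fXr.
have dS : [disjoint Sl & Sr] := disjointW SlV SrV dlr.
exists (Sl :|: Sr); last exact: cardsU_disjoint.
apply/kfeasibleP; exists (Xl :|: Xr); first exact: feasible_with_false_twin.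
apply: cardsU_disjoint; apply: disjointW dS.
  by apply: subset_trans XlS (subsetIl _ _).
by apply: subset_trans XrS (subsetIl _ _).
Qed.

Lemma alpha_false_twin :
  uniq (leaves l) -> uniq (leaves r) -> alpha t = alpha l + alpha r.
Proof.
move=> ul ur; have [S fS cS] := kfeasible_false_twin_optimal ul ur.
set a := alpha l + alpha r in fS *; set m := hatmin l + hatmin r in cS *.
have m_lt : m < infty V by rewrite -cS ltnS max_card.
have lower k : m + (k < a) <= gamma t k.
  apply: leq_gamma => [|S'/card_kfeasible_false_twin //].
  by apply: leq_trans m_lt; rewrite -[m.+1]addn1 leq_add2l leq_b1.
have min_t : hatmin t = m.
  apply/eqP; rewrite eqn_leq -{1}cS (leq_trans (hatmin_le_gamma t a) (gamma_le_card fS)).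
  by have [k _ <-] := hatmin_attained t; apply: leq_trans (lower k); rewrite leq_addr.
apply: alpha_unique => [|k ka].
  by apply/eqP; rewrite eqn_leq hatmin_le_gamma andbT min_t -cS gamma_le_card.
by have := lower k; rewrite ka min_t addn1.
Qed.

End FalseTwin.
End DecompositionTrees.

Theorem lemma19 (V : finType) (G : rel V) (T vl vr : dtree V) :
  simple_graph G -> distance_hereditary G -> decomposition_tree G T ->
  node_of (Node FalseTwin vl vr) T ->
  propP vl -> propP vr ->
  alpha (Node FalseTwin vl vr) = alpha vl + alpha vr.
Proof.
move=> _ _ [leavesT _] v_in_T _ _.
have uT : uniq (leaves T) by rewrite (perm_uniq leavesT) enum_uniq.
have [ul ur dlr] := disjoint_children (uniq_leaves_subtree v_in_T uT).
exact: alpha_false_twin.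
Qed.
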